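(* Let $\lambda\in\mathbb Z^n\setminus\{0\}$ have coprime coefficients and let $N\subseteq\mathcal N(\lambda)$ be a set of rank $n-1$. Then: (a) a polynomial $p\in\mathbb Z[X_1,\dots,X_n]$ satisfies $p(\gamma)=0$ for all $\gamma\in N$ if and only if $\mathbf X^{\lambda^+}-\mathbf X^{\lambda^-}$ divides $p$; (b) $\mathbf X^{\lambda^+}-\mathbf X^{\lambda^-}$ is irreducible in $\mathbb Z[X_1,\dots,X_n]$.
   Context: For $\alpha\in\mathbb N_0^n$, $\mathbf X^\alpha=\prod_iX_i^{(\alpha)_i}$. For $\gamma\in\mathbb Z^n$ and $p\in\mathbb Z[X_1,\dots,X_n]$, $p(\gamma)\in\mathbb Q(x)$ denotes the image of $p$ under the ring homomorphism $X_i\mapsto x^{(\gamma)_i}$. For $\lambda\in\mathbb Z^n$, $\lambda^+,\lambda^-$ are the unique vectors in $\mathbb N_0^n$ with $\lambda=\lambda^+-\lambda^-$ and $\lambda^+\cdot\lambda^-=0$. $\lambda$ has coprime coefficients if the gcd of its coordinates is $1$. $\mathcal N(\lambda)=\{\alpha\in\mathbb Z^n:\lambda\cdot\alpha=0\}$. For $M\subseteq\mathbb Q^n$, $M\mathbb Q$ denotes the $\mathbb Q$-subspace spanned by $M$; $M$ has rank $r$ if $\dim M\mathbb Q=r$ and $M$ is not covered by any finite union of subspaces of $M\mathbb Q$ of dimension $r-1$. *)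

From HB Require Import structures.
From mathcomp Require Import all_boot all_order all_algebra.
Set Implicit Arguments. Unset Strict Implicit. Unset Printing Implicit Defensive.
Import Order.TTheory GRing.Theory Num.Theory.
Local Open Scope ring_scope.

(* Z[X_1,...,X_n] : mpoly 0 = int, mpoly (m+1) = (mpoly m)[X_{m+1}] *)
Fixpoint mpoly (n : nat) : idomainType :=
  if n is m.+1 then ({poly mpoly m} : idomainType) else int.

(* the variable X_(i+1) (0-based index i) in mpoly n; 0 if i >= n *)
Fixpoint mX (n i : nat) : mpoly n :=
  match n return mpoly n with
  | 0 => 0
  | m.+1 => if i == m then ('X : {poly mpoly m}) else ((mX m i)%:P : {poly mpoly m})
  end.

Definition mmono (n : nat) (alpha : 'rV[nat]_n) : mpoly n :=
  \prod_(i < n) mX n i ^+ alpha 0 i.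

Definition Qx : fieldType := {fraction {poly rat}}.
Definition xQ : Qx := tofrac ('X : {poly rat}).

(* evaluation X_(i+1) |-> x ^ g i (integer exponent), extended as ring hom *)
Fixpoint meval (n : nat) (g : nat -> int) : mpoly n -> Qx :=
  match n return mpoly n -> Qx with
  | 0 => fun z => (z : int)%:~R
  | m.+1 => fun p => (map_poly (@meval m g) (p : {poly mpoly m})).[xQ ^ g m]
  end.

Definition rvfun (n : nat) (v : 'rV[int]_n) (i : nat) : int :=
  match @insub nat (fun k => k < n)%N 'I_n i with Some j => v 0 j | None => 0 end.

Definition peval (n : nat) (gamma : 'rV[int]_n) (p : mpoly n) : Qx :=
  @meval n (rvfun gamma) p.

Definition lam_pos (n : nat) (lam : 'rV[int]_n) : 'rV[nat]_n :=
  \row_j (if 0 <= lam 0 j then absz (lam 0 j) else 0%N).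
Definition lam_neg (n : nat) (lam : 'rV[int]_n) : 'rV[nat]_n :=
  \row_j (if lam 0 j < 0 then absz (lam 0 j) else 0%N).

Definition binom (n : nat) (lam : 'rV[int]_n) : mpoly n :=
  mmono (lam_pos lam) - mmono (lam_neg lam).

Definition coprime_coefs (n : nat) (lam : 'rV[int]_n) : Prop :=
  \big[gcdn/0%N]_(i < n) absz (lam 0 i) = 1%N.

Definition dotz (n : nat) (a b : 'rV[int]_n) : int := \sum_(i < n) a 0 i * b 0 i.

Definition Nlam (n : nat) (lam : 'rV[int]_n) (a : 'rV[int]_n) : Prop := dotz lam a = 0.

Definition toQ (n : nat) (v : 'rV[int]_n) : 'rV[rat]_n := map_mx (fun z : int => z%:~R) v.

Definition imQ (n : nat) (N : 'rV[int]_n -> Prop) (v : 'rV[rat]_n) : Prop :=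
  exists g, N g /\ v = toQ g.

(* M has rank r: dim (M Q) = r (witnessed by a spanning family S of elements of M)
   and M is not covered by finitely many subspaces of M Q of dimension r - 1 *)
Definition has_rank (n : nat) (M : 'rV[rat]_n -> Prop) (r : nat) : Prop :=
  exists (k : nat) (S : 'M[rat]_(k, n)),
    (forall i, M (row i S)) /\ \rank S = r /\ (forall v, M v -> (v <= S)%MS) /\
    (forall Us : seq 'M[rat]_n,
       (forall U, U \in Us -> (U <= S)%MS /\ (\rank U)%:Z = r%:Z - 1) ->
       exists v, M v /\ forall U, U \in Us -> ~~ (v <= U)%MS).

Definition rdvd (R : idomainType) (a b : R) : Prop := exists c, b = c * a.
Definition rirreducible (R : idomainType) (p : R) : Prop :=
  p != 0 /\ p \isn't a GRing.unit /\
  forall a b : R, p = a * b -> a \is a GRing.unit \/ b \is a GRing.unit.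

From HB Require Import structures.
From mathcomp Require Import all_boot all_order all_algebra.
From mathcomp Require Import zify.
Set Implicit Arguments. Unset Strict Implicit. Unset Printing Implicit Defensive.
Import Order.TTheory GRing.Theory Num.Theory.
Local Open Scope ring_scope.

(* Write p = sum_a c_a X^a.  At a point g of N, p(g) = sum_a c_a x^(g.a), and distinct
   powers of x are linearly independent, so p(g) = 0 says that the c_a cancel within each
   class of exponents with the same value of g.a.  N spans the hyperplane lambda^perp and
   is not covered by the finitely many subspaces NQ /\ d^perp (d not parallel to lambda,
   d a difference of exponents of p), each of rank n-2; so g can be chosen such that
   g.(a - a') = 0 forces a - a' in Q lambda, hence in Z lambda by coprimality.  Then
   X^lambda+ - X^lambda- divides X^a - X^a', and therefore p: this is (a).  The same
   generic point shows that X^lambda+ - X^lambda- is prime, whence (b). *)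

Section Rdvd.
Variable R : idomainType.
Implicit Types a b c : R.

Lemma rdvd0 a : rdvd a 0. Proof. by exists 0; rewrite mul0r. Qed.

Lemma rdvdN a b : rdvd a b -> rdvd a (- b).
Proof. by move=> [x ->]; exists (- x); rewrite mulNr. Qed.

Lemma rdvdD a b c : rdvd a b -> rdvd a c -> rdvd a (b + c).
Proof. by move=> [x ->] [y ->]; exists (x + y); rewrite mulrDl. Qed.

Lemma rdvdMl a b c : rdvd a b -> rdvd a (c * b).
Proof. by move=> [x ->]; exists (c * x); rewrite mulrA. Qed.

Lemma rdvd_sum a (I : Type) (r : seq I) (P : pred I) (F : I -> R) :
  (forall i, P i -> rdvd a (F i)) -> rdvd a (\sum_(i <- r | P i) F i).
Proof. by move=> dvdF; elim/big_ind: _ => //; [apply: rdvd0 | apply: rdvdD]. Qed.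

Lemma prime_rirreducible p : p != 0 -> p \isn't a GRing.unit ->
  (forall a b, rdvd p (a * b) -> rdvd p a \/ rdvd p b) -> rirreducible p.
Proof.
move=> p0 pNunit p_prime; split=> //; split=> // a b pE.
have cofactor_unit x y : p = x * y -> rdvd p x -> y \is a GRing.unit.
  move=> {}pE [c xE]; have cy1 : c * y = 1.
    by apply: (mulIf p0); rewrite mul1r {2}pE xE mulrAC mulrC.
  by apply/unitrP; exists c; rewrite cy1 mulrC cy1.
case: (p_prime a b); first by exists 1; rewrite mul1r.
  by move=> /(cofactor_unit _ _ pE); right.
by rewrite mulrC in pE => /(cofactor_unit _ _ pE); left.
Qed.

End Rdvd.

Lemma meval_rmorphism n g : {f : {rmorphism mpoly n -> Qx} | f =1 @meval n g}.
Proof.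
elim: n => [|m [f fE]].
  by exists (GRing.RMorphism.clone _ _ (intmul (1 : Qx)) _) => z.
have cfu : commr_rmorph f (xQ ^ g m) by move=> a; apply: mulrC.
exists (horner_morph cfu : {poly mpoly m} -> Qx) => p /=.
by rewrite /horner_morph; congr (_.[_]); apply: eq_map_poly.
Qed.

Section Evaluation.
Variables (n : nat) (g : 'rV[int]_n).

Let pevalE : {f : {rmorphism mpoly n -> Qx} | f =1 peval g}.
Proof. exact: meval_rmorphism. Qed.

Lemma pevalM p q : peval g (p * q) = peval g p * peval g q.
Proof. by case: pevalE => f fE; rewrite -!fE rmorphM. Qed.

Lemma pevalB p q : peval g (p - q) = peval g p - peval g q.
Proof. by case: pevalE => f fE; rewrite -!fE rmorphB. Qed.

Lemma peval0 : peval g 0 = 0.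
Proof. by case: pevalE => f fE; rewrite -!fE rmorph0. Qed.

Lemma peval1 : peval g 1 = 1.
Proof. by case: pevalE => f fE; rewrite -!fE rmorph1. Qed.

Lemma peval_lincomb (I : Type) (r : seq I) (c : I -> int) (F : I -> mpoly n) :
  peval g (\sum_(i <- r) (c i)%:~R * F i) = \sum_(i <- r) (c i)%:~R * peval g (F i).
Proof.
case: pevalE => f fE; rewrite -fE rmorph_sum; apply: eq_bigr => i _.
by rewrite rmorphM rmorph_int fE.
Qed.

End Evaluation.

Lemma meval_mX n (g : nat -> int) i : (i < n)%N -> meval g (mX n i) = xQ ^ g i.
Proof.
elim: n => // m IHm; rewrite ltnS leq_eqVlt /=.
have [f fE] := meval_rmorphism m g; rewrite -(eq_map_poly fE _).
case: eqP => [-> _ | _ lt_im]; first by rewrite map_polyX hornerX.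
by rewrite map_polyC hornerC; apply: etrans (fE _) (IHm lt_im).
Qed.

Lemma xQ_neq0 : xQ != 0.
Proof. by rewrite tofrac_eq0 polyX_eq0. Qed.

Definition intrv n (a : 'rV[nat]_n) : 'rV[int]_n := map_mx Posz a.

Lemma rvfunE n (g : 'rV[int]_n) (i : 'I_n) : rvfun g i = g 0 i.
Proof. by rewrite /rvfun valK. Qed.

Lemma peval_mmono n (g : 'rV[int]_n) (a : 'rV[nat]_n) :
  peval g (mmono a) = xQ ^ dotz g (intrv a).
Proof.
have [f fE] := meval_rmorphism n (rvfun g).
rewrite /peval -fE rmorph_prod /dotz.
rewrite (big_morph _ (fun u v => expfzDr u v xQ_neq0) (expr0z _)).
by apply: eq_bigr => i _; rewrite rmorphXn fE meval_mX // rvfunE mxE -exprz_exp.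
Qed.

Definition extrv m (a : 'rV[nat]_m) (k : nat) : 'rV[nat]_m.+1 :=
  \row_j (if @insub nat (fun i => i < m)%N 'I_m j is Some i then a 0 i else k).

Lemma mmono_extrv m (a : 'rV[nat]_m) k :
  mmono (extrv a k) = ((mmono a)%:P * 'X^k : {poly mpoly m}).
Proof.
rewrite /mmono big_ord_recr /= eqxx mxE insubF ?ltnn // rmorph_prod.
congr (_ * _); apply: eq_bigr => i _ /=.
by rewrite (ltn_eqF (ltn_ord i)) rmorphXn mxE valK.
Qed.

Fixpoint mterms (n : nat) : mpoly n -> seq (int * 'rV[nat]_n) :=
  match n return mpoly n -> seq (int * 'rV[nat]_n) with
  | 0 => fun p => [:: (p : int, 0)]
  | m.+1 => fun p =>
      flatten [seq [seq (y.1, extrv y.2 k) | y <- mterms ((p : {poly mpoly m})`_k)]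
              | k <- iota 0 (size (p : {poly mpoly m}))]
  end.

Definition mexps n (p : mpoly n) : seq 'rV[nat]_n := [seq y.2 | y <- mterms p].

Lemma mterms_sum n (p : mpoly n) : p = \sum_(y <- mterms p) y.1%:~R * mmono y.2.
Proof.
elim: n p => [|m IHm] p /=.
  by rewrite big_seq1 /mmono big_ord0 mulr1 intz.
rewrite big_flatten /= big_map.
have -> : iota 0 (size (p : {poly mpoly m})) = index_iota 0 (size (p : {poly mpoly m})).
  by rewrite /index_iota subn0.
rewrite big_mkord -[LHS]coefK poly_def; apply: eq_bigr => k _.
rewrite {1}(IHm (p : {poly mpoly m})`_k) big_map -mul_polyC rmorph_sum big_distrl.
by apply: eq_bigr => y _; rewrite mmono_extrv rmorphM rmorph_int /= mulrA.
Qed.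

Lemma xQ_exprn_free (L : seq (int * nat)) :
  \sum_(y <- L) y.1%:~R * xQ ^+ y.2 = 0 -> forall v, \sum_(y <- L | y.2 == v) y.1 = 0.
Proof.
move=> L0 v; pose q : {poly rat} := \sum_(y <- L) y.1%:~R *: 'X^(y.2).
have q0 : q = 0.
  apply/eqP; rewrite -tofrac_eq0 -L0 rmorph_sum; apply/eqP/eq_bigr => y _.
  by rewrite -mul_polyC rmorphM /= !rmorphXn !rmorph_int.
apply: (@intr_inj rat); rewrite [RHS]rmorph0 -[RHS](coef0 _ v) -q0 coef_sum.
rewrite rmorph_sum big_mkcond /=.
by apply: eq_bigr => y _; rewrite coefZ coefXn eq_sym; case: eqP; rewrite ?mulr1 ?mulr0.
Qed.

Lemma xQ_expz_free (L : seq (int * int)) :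
  \sum_(y <- L) y.1%:~R * xQ ^ y.2 = 0 -> forall v, \sum_(y <- L | y.2 == v) y.1 = 0.
Proof.
move=> L0 v; pose M : int := (absz v + \sum_(y <- L) absz y.2)%N.
have shift_ge0 y : y \in L -> 0 <= y.2 + M.
  by move=> yL; rewrite /M (big_rem _ yL) /=; lia.
have v_shift_ge0 : 0 <= v + M by rewrite /M; lia.
pose L' := [seq (y.1, absz (y.2 + M)) | y <- L].
have L'0 : \sum_(y <- L') y.1%:~R * xQ ^+ y.2 = 0.
  transitivity (xQ ^ M * \sum_(y <- L) y.1%:~R * xQ ^ y.2); last by rewrite L0 mulr0.
  rewrite big_map mulr_sumr big_seq [RHS]big_seq.
  apply: eq_bigr => y yL /=; rewrite mulrCA -expfzDr ?xQ_neq0 // [M + _]addrC.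
  by rewrite -[in RHS](gez0_abs (shift_ge0 y yL)).
rewrite -[RHS](xQ_exprn_free L'0 (absz (v + M))) big_map.
rewrite big_seq_cond [RHS]big_seq_cond.
apply: eq_bigl => y /=; case yL: (y \in L) => //=; apply/eqP/eqP => [-> // | ].
by move/(congr1 Posz); rewrite !gez0_abs ?shift_ge0 //; apply: addIr.
Qed.

Lemma rdvd_balanced_sum (R : idomainType) (T K : eqType) (f : T -> R) (w : T -> K)
    (B : R) (L : seq (int * T)) :
  {in L &, forall y z, w y.2 = w z.2 -> rdvd B (f y.2 - f z.2)} ->
  (forall v, \sum_(y <- L | w y.2 == v) y.1 = 0) ->
  rdvd B (\sum_(y <- L) y.1%:~R * f y.2).
Proof.
have [k] := ubnP (size L); elim: k L => // k IHk [_ _ _|[c e] L' /=].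
  by rewrite big_nil; apply: rdvd0.
set L := (c, e) :: L' => sizeL dvdL balL.
rewrite (bigID (fun y => w y.2 == w e)) /=; apply: rdvdD.
  have -> : \sum_(y <- L | w y.2 == w e) y.1%:~R * f y.2 =
            \sum_(y <- L | w y.2 == w e) y.1%:~R * (f y.2 - f e)
            + (\sum_(y <- L | w y.2 == w e) y.1)%:~R * f e.
    rewrite rmorph_sum mulr_suml -big_split /=.
    by apply: eq_bigr => y _; rewrite mulrBr subrK.
  rewrite balL mul0r addr0 big_seq_cond; apply: rdvd_sum => y /andP[yL /eqP wy].
  by apply/rdvdMl/(dvdL _ _ yL (mem_head _ _)).
rewrite -big_filter; apply: IHk.
- by rewrite size_filter /= eqxx /=; apply: leq_ltn_trans (count_size _ _) _.
- by apply: sub_in2 dvdL => y; rewrite mem_filter => /andP[].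
move=> v; rewrite big_filter_cond; case: (eqVneq v (w e)) => [-> | nv].
  by rewrite big_pred0 // => y; rewrite andbC; case: eqP => // ->; rewrite eqxx.
rewrite -[RHS](balL v); apply: eq_bigl => y.
by case: eqP => // ->; rewrite eq_sym (negPf nv).
Qed.

Lemma rdvd_of_peval_eq0 n (B : mpoly n) (g : 'rV[int]_n) (p : mpoly n) :
  {in mexps p &, forall a a',
     dotz g (intrv a) = dotz g (intrv a') -> rdvd B (mmono a - mmono a')} ->
  peval g p = 0 -> rdvd B p.
Proof.
move=> dvd_exps p0; rewrite [p]mterms_sum peval_lincomb in p0.
rewrite [p in rdvd _ p]mterms_sum.
apply: (@rdvd_balanced_sum _ _ _ _ (fun a => dotz g (intrv a))) => [y z yp zp|v].
  by apply: dvd_exps; apply: map_f.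
pose L := [seq (y.1, dotz g (intrv y.2)) | y <- mterms p].
have L0 : \sum_(y <- L) y.1%:~R * xQ ^ y.2 = 0.
  by rewrite big_map -[RHS]p0; apply: eq_bigr => y _; rewrite peval_mmono.
by have := xQ_expz_free L0 v; rewrite big_map.
Qed.

Lemma mmonoD n (a b : 'rV[nat]_n) : mmono (a + b) = mmono a * mmono b.
Proof. by rewrite /mmono -big_split; apply: eq_bigr => i _; rewrite mxE exprD. Qed.

Lemma intrv_shiftP n (a b : 'rV[nat]_n) (d : 'rV[int]_n) :
  intrv a = intrv b + d <-> forall i, (a 0 i)%:Z = (b 0 i)%:Z + d 0 i.
Proof.
split=> [/rowP abE i | abE]; first by move: (abE i); rewrite !mxE.
by apply/rowP => i; rewrite !mxE.
Qed.

Section BinomialShift.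
Variables (n : nat) (lam : 'rV[int]_n).

(* [lia] fails on goals mentioning the matrix entry [lam 0 i], so it is generalized first. *)
Lemma rdvd_binom_shift1 (a b : 'rV[nat]_n) :
  intrv a = intrv b + lam -> rdvd (binom lam) (mmono a - mmono b).
Proof.
move/intrv_shiftP => abE; exists (mmono (\row_i minn (a 0 i) (b 0 i))).
rewrite /binom mulrBr -!mmonoD; congr (mmono _ - mmono _); apply/rowP => i;
  move: (abE i); rewrite !mxE; case: (lerP 0 (lam 0 i)); move: (lam 0 i); lia.
Qed.

Lemma rdvd_binom_shiftn (a b : 'rV[nat]_n) (k : nat) :
  intrv a = intrv b + k%:Z *: lam -> rdvd (binom lam) (mmono a - mmono b).
Proof.
elim: k a => [|k IHk] a /intrv_shiftP abE.
  have -> : a = b by apply/rowP => i; move: (abE i); rewrite mxE mul0r addr0; lia.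
  by rewrite subrr; apply: rdvd0.
pose c := \row_i absz ((b 0 i)%:Z + k%:Z * lam 0 i).
have cE i : (c 0 i)%:Z = (b 0 i)%:Z + k%:Z * lam 0 i.
  by move: (abE i); rewrite !mxE; case: (lerP 0 (lam 0 i)); move: (lam 0 i); nia.
have -> : mmono a - mmono b = (mmono a - mmono c) + (mmono c - mmono b).
  by rewrite addrA subrK.
apply: rdvdD; last by apply/IHk/intrv_shiftP => i; rewrite cE mxE.
apply/rdvd_binom_shift1/intrv_shiftP => i.
by move: (abE i) (cE i); rewrite mxE; move: (lam 0 i); lia.
Qed.

Lemma rdvd_binom_shift (a b : 'rV[nat]_n) (k : int) :
  intrv a = intrv b + k *: lam -> rdvd (binom lam) (mmono a - mmono b).
Proof.
case: k => k abE; first exact: rdvd_binom_shiftn abE.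
rewrite -opprB; apply/rdvdN/(@rdvd_binom_shiftn _ _ k.+1)/intrv_shiftP => i.
by move/intrv_shiftP/(_ i): abE; rewrite !mxE NegzE; move: (lam 0 i); lia.
Qed.

End BinomialShift.

Lemma coprime_rat_multiple n (lam d : 'rV[int]_n) (q : rat) :
  coprime_coefs lam -> toQ d = q *: toQ lam -> exists k : int, d = k *: lam.
Proof.
move=> lam_coprime /rowP dE.
have cross_mul (j : 'I_n) : denq q * d 0 j = numq q * lam 0 j.
  apply: (@intr_inj rat); move: (dE j); rewrite !mxE !rmorphM /= => ->.
  by rewrite numqE mulrCA mulrA.
have den_dvd (j : 'I_n) : dvdn (absz (denq q)) (absz (lam 0 j)).
  rewrite -(@Gauss_dvdr _ (absz (numq q))); last by rewrite coprime_sym coprime_num_den.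
  by rewrite -abszM -cross_mul abszM dvdn_mulr.
have den1 : denq q = 1.
  have /eqP : absz (denq q) = 1%N.
    apply/eqP; rewrite -dvdn1 -lam_coprime.
    by elim/big_ind: _ => [|x y dx dy|j _]; rewrite ?dvdn0 ?dvdn_gcd ?dx ?dy ?den_dvd.
  by have := denq_gt0 q; case: (denq q) => // [[|[|]]].
by exists (numq q); apply/rowP => j; have := cross_mul j; rewrite den1 mul1r mxE.
Qed.

Section CorankOne.
Variables (F : fieldType) (n k : nat) (S : 'M[F]_(k, n)) (l : 'rV[F]_n).
Hypotheses (l_neq0 : l != 0) (l_orthS : l *m S^T = 0) (rankS : \rank S = n.-1).

Let n_gt0 : (0 < n)%N.
Proof.
rewrite lt0n; apply: contraNneq l_neq0 => n0.
by apply/eqP/rowP => i; move: (ltn_ord i); rewrite {2}n0.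
Qed.

Lemma kermx_trS_sub : (kermx S^T <= l)%MS.
Proof.
have l_ker : (l <= kermx S^T)%MS by rewrite sub_kermx l_orthS.
have [_ <-] := mxrank_leqif_sup l_ker.
by rewrite rank_rV l_neq0 mxrank_ker mxrank_tr rankS; apply/eqP; lia.
Qed.

Lemma rank_cap_kermx (d : 'rV[F]_n) :
  ~~ (d <= l)%MS -> (\rank (S :&: kermx d^T))%:Z = (n.-1)%:Z - 1.
Proof.
move=> dNl; have d_neq0 : d != 0 by apply: contraNneq dNl => ->; apply: sub0mx.
have SNker : ~~ (S <= kermx d^T)%MS.
  apply: contra dNl; rewrite sub_kermx => /eqP Sd0; apply: submx_trans kermx_trS_sub.
  by rewrite sub_kermx -(trmxK d) -trmx_mul Sd0 trmx0.
have rank_ker : \rank (kermx d^T) = n.-1.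
  by rewrite mxrank_ker mxrank_tr rank_rV d_neq0 subn1.
have rank_sum : \rank (S + kermx d^T)%MS = n.
  have [le_ker_sum eq_ker_sum] := mxrank_leqif_sup (addsmxSr S (kermx d^T)).
  have : \rank (kermx d^T) != \rank (S + kermx d^T)%MS.
    by rewrite eq_ker_sum addsmx_sub negb_and SNker.
  by move: le_ker_sum (rank_leq_col (S + kermx d^T)%MS); rewrite rank_ker; lia.
by have := mxrank_sum_cap S (kermx d^T); rewrite rank_sum rankS rank_ker; move: n_gt0; lia.
Qed.

End CorankOne.

Section Dotz.
Variable n : nat.
Implicit Types a b c : 'rV[int]_n.

Lemma dotzC a b : dotz a b = dotz b a.
Proof. by apply: eq_bigr => i _; rewrite mulrC. Qed.

Lemma dotzDr a b c : dotz a (b + c) = dotz a b + dotz a c.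
Proof. by rewrite -big_split; apply: eq_bigr => i _; rewrite mxE mulrDr. Qed.

Lemma dotzBr a b c : dotz a (b - c) = dotz a b - dotz a c.
Proof. by rewrite -sumrB; apply: eq_bigr => i _; rewrite !mxE mulrBr. Qed.

Lemma dotz_self_neq0 a : a != 0 -> dotz a a != 0.
Proof.
move=> a_neq0; have [i ai_neq0] : exists i, a 0 i != 0.
  apply/existsP; apply: contraR a_neq0; rewrite negb_exists => /forallP a0.
  by apply/eqP/rowP => j; rewrite mxE; apply/eqP/negPn/a0.
rewrite /dotz (bigD1 i) //= gt_eqF // ltr_wpDr ?sumr_ge0 // => [j _|].
  by rewrite -expr2 sqr_ge0.
by rewrite -expr2 lt_def sqrf_eq0 ai_neq0 sqr_ge0.
Qed.

Lemma toQ_dotz a b : (toQ a *m (toQ b)^T) 0 0 = (dotz a b)%:~R.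
Proof.
by rewrite mxE rmorph_sum; apply: eq_bigr => j _; rewrite !mxE rmorphM.
Qed.

End Dotz.

Lemma intrv_lam_pos n (lam : 'rV[int]_n) :
  intrv (lam_pos lam) = intrv (lam_neg lam) + lam.
Proof.
apply/rowP => i; rewrite !mxE.
by case: (lerP 0 (lam 0 i)) => [/gez0_abs | /ltz0_abs ->]; rewrite ?add0r ?addr0 // addNr.
Qed.

Lemma binom_neq0 n (lam : 'rV[int]_n) : lam != 0 -> binom lam != 0.
Proof.
move=> lam_neq0; apply/eqP => binom0.
set A := dotz lam (intrv (lam_neg lam)); set D := dotz lam lam.
have : \sum_(y <- [:: (1, A + D); (-1, A)]) y.1%:~R * xQ ^ y.2 = 0.
  rewrite !big_cons big_nil addr0 rmorphN1 mulN1r mul1r /A /D -dotzDr -intrv_lam_pos.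
  by rewrite -!peval_mmono -pevalB -/(binom lam) binom0 peval0.
move/xQ_expz_free/(_ (A + D)).
rewrite !big_cons big_nil eqxx /= -{1}(addr0 A) (inj_eq (addrI A)).
by rewrite eq_sym (negPf (dotz_self_neq0 lam_neq0)) addr0.
Qed.

Section GenericPoint.
Variables (n : nat) (lam : 'rV[int]_n) (N : 'rV[int]_n -> Prop).
Hypotheses (lam_neq0 : lam != 0) (lam_coprime : coprime_coefs lam).
Hypotheses (N_orth : forall g, N g -> Nlam lam g) (N_rank : has_rank (imQ N) n.-1).

Lemma exists_generic_point (ds : seq 'rV[int]_n) :
  exists2 g, N g & forall d, d \in ds -> dotz g d = 0 -> exists k : int, d = k *: lam.
Proof.
have [k [S [S_N [rankS [N_S N_cover]]]]] := N_rank.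
have lamQ_neq0 : toQ lam != 0.
  apply: contraNneq lam_neq0 => /rowP lam0; apply/eqP/rowP => j.
  by move/eqP: (lam0 j); rewrite !mxE intr_eq0 => /eqP.
have lam_orthS : toQ lam *m S^T = 0.
  apply/rowP => i; have [g [Ng gE]] := S_N i.
  have -> : (toQ lam *m S^T) 0 i = (toQ lam *m (row i S)^T) 0 0.
    by rewrite !mxE; apply: eq_bigr => j _; rewrite !mxE.
  by rewrite gE toQ_dotz (N_orth Ng) mxE.
pose Us := [seq (S :&: kermx (toQ d)^T)%MS | d <- ds & ~~ (toQ d <= toQ lam)%MS].
have [_ [[g [Ng ->]] g_avoids]] : exists v, imQ N v /\ forall U, U \in Us -> ~~ (v <= U)%MS.
  apply: N_cover => U /mapP[d]; rewrite mem_filter => /andP[dNl _] ->.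
  by split; [apply: capmxSl | apply: (rank_cap_kermx lamQ_neq0 lam_orthS rankS)].
exists g => // d dds gd0.
have [/submxP[D dE] | dNl] := boolP (toQ d <= toQ lam)%MS.
  apply: (@coprime_rat_multiple _ _ _ (D 0 0)) => //.
  by rewrite dE {1}[D]mx11_scalar mul_scalar_mx.
have dUs : (S :&: kermx (toQ d)^T)%MS \in Us by apply: map_f; rewrite mem_filter dNl.
case/negP: (g_avoids _ dUs).
rewrite sub_capmx N_S /=; last by exists g.
by rewrite sub_kermx; apply/eqP/rowP => i; rewrite ord1 toQ_dotz gd0 mxE.
Qed.

Lemma binom_vanishes g : N g -> peval g (binom lam) = 0.
Proof.
move=> Ng; rewrite pevalB !peval_mmono intrv_lam_pos dotzDr [dotz g lam]dotzC.
by rewrite (N_orth Ng) addr0 subrr.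
Qed.

Lemma exists_dividing_point (ps : seq (mpoly n)) :
  exists2 g, N g & forall p, p \in ps -> peval g p = 0 -> rdvd (binom lam) p.
Proof.
pose E := flatten [seq mexps p | p <- ps].
have [g Ng g_generic] := exists_generic_point [seq intrv a - intrv b | a <- E, b <- E].
exists g => // p pps; apply: rdvd_of_peval_eq0 => a b ap bp gab.
have ab_ds : intrv a - intrv b \in [seq intrv a - intrv b | a <- E, b <- E].
  by apply: allpairs_f; apply/flatten_mapP; exists p.
have [|k abE] := g_generic _ ab_ds; first by rewrite dotzBr gab subrr.
by apply: (@rdvd_binom_shift _ _ _ _ k); rewrite -abE addrC subrK.
Qed.

Lemma binom_not_unit : binom lam \isn't a GRing.unit.
Proof.
have [k [S [_ [_ [_ N_cover]]]]] := N_rank.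
have [|_ [[g [Ng _]] _]] := N_cover [::]; first by move=> U; rewrite in_nil.
apply/negP => binom_unit; have := congr1 (peval g) (mulVr binom_unit).
by rewrite pevalM binom_vanishes // mulr0 peval1 => /eqP; rewrite eq_sym oner_eq0.
Qed.

Lemma binom_prime a b :
  rdvd (binom lam) (a * b) -> rdvd (binom lam) a \/ rdvd (binom lam) b.
Proof.
move=> [c abE]; have [g Ng dvd_g] := exists_dividing_point [:: a; b].
have /eqP : peval g a * peval g b = 0 by rewrite -pevalM abE pevalM binom_vanishes ?mulr0.
rewrite mulf_eq0 => /orP[/eqP ga0 | /eqP gb0]; [left | right];
  by apply: dvd_g; rewrite ?inE ?eqxx ?orbT.
Qed.

End GenericPoint.

Unset Implicit Arguments.

Theorem lemma3p8 (n : nat) (lam : 'rV[int]_n) (N : 'rV[int]_n -> Prop) :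
  lam != 0 -> coprime_coefs lam ->
  (forall g, N g -> Nlam lam g) ->
  has_rank (imQ N) n.-1 ->
  (forall p : mpoly n, (forall g, N g -> peval g p = 0) <-> rdvd (binom lam) p) /\
  rirreducible (binom lam).
Proof.
move=> lam_neq0 lam_coprime N_orth N_rank; split=> [p|]; first split.
- move=> p_vanishes.
  have [g Ng dvd_g] := exists_dividing_point lam_neq0 lam_coprime N_orth N_rank [:: p].
  exact: dvd_g (mem_head _ _) (p_vanishes _ Ng).
- by case=> c -> g Ng; rewrite pevalM (binom_vanishes N_orth Ng) mulr0.
apply: prime_rirreducible; first exact: binom_neq0.
  exact: binom_not_unit N_orth N_rank.
exact: binom_prime lam_neq0 lam_coprime N_orth N_rank.
Qed.
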